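(* Let $f_0(s)=\tfrac32 s^{2/3}$ and, for $t\in\mathbb C$ with $0<|t|<1$, let $f_t(s)=2^{-1/3}|t|^{2/3}\int_0^{\cosh^{-1}(s/|t|)}(\sinh 2\tau-2\tau)^{1/3}\,d\tau$ for $s\geq |t|$. Then: (1) for every $\delta\in(0,1)$ and every integer $k\geq 0$, the $k$-th derivatives $f_t^{(k)}(s)$ converge uniformly on $s\in[\delta,1]$ to $f_0^{(k)}(s)$ as $t\to 0$; (2) for every $0<\delta'<\delta<\tfrac14$ there is $\alpha_{\delta'}>0$ such that for $|t|<\alpha_{\delta'}$ and $s\in[\delta',\delta]$ one has $\tfrac12\leq f_t'(s)/f_0'(s)\leq 2$ and $\tfrac12\leq f_t''(s)/f_0''(s)\leq 2$. *)

From Stdlib Require Import Reals Lra Classical ClassicalEpsilon.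
Open Scope R_scope.

(* Complex numbers represented as pairs of reals; |t| is the Euclidean modulus. *)
Definition Cmod (t : R * R) : R := sqrt (fst t ^ 2 + snd t ^ 2).

(* Real cube root of a nonnegative real (0 at 0); only used on [0, +oo). *)
Definition cbrt_nonneg (x : R) : R :=
  if Rle_dec x 0 then 0 else Rpower x (1/3).

Definition arccosh (x : R) : R := ln (x + sqrt (x ^ 2 - 1)).

(* Total Riemann integral: the Riemann integral when it exists, 0 otherwise. *)
Definition Rint (f : R -> R) (a b : R) : R :=
  match excluded_middle_informative
          (exists v, exists pr : Riemann_integrable f a b, RiemannInt pr = v) with
  | left H => proj1_sig (constructive_indefinite_description _ H)
  | right _ => 0
  end.

(* Total derivative: the derivative when it exists, 0 otherwise. *)
Definition Deriv (f : R -> R) (x : R) : R :=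
  match excluded_middle_informative (exists l, derivable_pt_lim f x l) with
  | left H => proj1_sig (constructive_indefinite_description _ H)
  | right _ => 0
  end.

Fixpoint Dn (k : nat) (f : R -> R) : R -> R :=
  match k with
  | O => f
  | S k' => Deriv (Dn k' f)
  end.

Definition f0 (s : R) : R := 3/2 * Rpower s (2/3).

(* f_t(s) = 2^(-1/3) |t|^(2/3) int_0^{arccosh(s/|t|)} (sinh 2tau - 2tau)^(1/3) dtau,
   meaningful for 0 < |t| < 1 and s >= |t|. *)
Definition ft (t : R * R) (s : R) : R :=
  Rpower 2 (-(1/3)) * Rpower (Cmod t) (2/3) *
  Rint (fun tau => cbrt_nonneg (sinh (2 * tau) - 2 * tau)) 0 (arccosh (s / Cmod t)).

From Stdlib Require Import Reals Lra ClassicalEpsilon.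
Open Scope R_scope.

(* Write ep = |t| and rad ep s = sqrt (s^2 - ep^2).  The substitution
   s = ep cosh T turns sinh 2T - 2T into 2 area2 ep s / ep^2, where
   area2 ep s = s rad - ep^2 ln (s + rad) + ep^2 ln ep is the antiderivative
   of 2 rad vanishing at ep; the fundamental theorem of calculus then gives the
   closed form f_t'(s) = area2 ep s ^ (1/3) / rad ep s, whose ep = 0 instance is
   f_0'(s) = s^(2/3) / s.  All higher derivatives are obtained by formally
   differentiating this expression: they are values of polynomial [term]s in
   s, rad, 1/rad, area2^(1/3), area2^(-1/3), a syntax closed under derivation.
   Since rad ep -> s and area2 ep -> s^2 uniformly on [dl, 1], and uniform
   convergence is preserved by sums, products, reciprocals and cube roots of
   limits bounded away from 0, every derivative of order >= 1 converges
   uniformly.  Order 0 follows by integrating the first derivatives from a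
   point d0 where 0 <= f_t(d0) <= f_0(d0) is small.  Part (2) combines this with
   the lower bounds f_0' >= 1 and |f_0''| >= 1/3 on (0, 1]. *)

Lemma Deriv_correct f x l : derivable_pt_lim f x l -> Deriv f x = l.
Proof.
  intros H. unfold Deriv. destruct excluded_middle_informative as [E|E].
  - destruct (constructive_indefinite_description _ E) as [l' Hl']; simpl.
    eapply uniqueness_limite; eauto.
  - exfalso; apply E; eauto.
Qed.

Lemma Dn_succ_inner k f : Dn (S k) f = Dn k (Deriv f).
Proof.
  induction k as [|k IH]; [reflexivity|].
  change (Deriv (Dn (S k) f) = Deriv (Dn k (Deriv f))). now rewrite IH.
Qed.

Lemma Dn_on_open (U : R -> Prop) (f : R -> R) (g : nat -> R -> R) :
  (forall x, U x -> exists a b, a < x < b /\ forall y, a < y < b -> U y) ->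
  (forall x, U x -> f x = g O x) ->
  (forall n x, U x -> derivable_pt_lim (g n) x (g (S n) x)) ->
  forall k x, U x -> Dn k f x = g k x.
Proof.
  intros HU Hf Hg k. induction k as [|k IH]; intros x Hx; simpl; auto.
  apply Deriv_correct. destruct (HU x Hx) as [a [b [Hab HUab]]].
  apply derivable_pt_lim_locally_ext with (g k) a b; auto.
  intros y Hy; symmetry; auto.
Qed.

(* The library's differentiation rules, restated for functions written as
   lambda-terms so that they apply by unification inside larger expressions. *)
Lemma D_val f x l l' : derivable_pt_lim f x l -> l = l' -> derivable_pt_lim f x l'.
Proof. now intros H <-. Qed.
Lemma D_plus f g x a b : derivable_pt_lim f x a -> derivable_pt_lim g x b ->
  derivable_pt_lim (fun y => f y + g y) x (a + b).
Proof. apply derivable_pt_lim_plus. Qed.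
Lemma D_minus f g x a b : derivable_pt_lim f x a -> derivable_pt_lim g x b ->
  derivable_pt_lim (fun y => f y - g y) x (a - b).
Proof. apply derivable_pt_lim_minus. Qed.
Lemma D_mult f g x a b : derivable_pt_lim f x a -> derivable_pt_lim g x b ->
  derivable_pt_lim (fun y => f y * g y) x (a * g x + f x * b).
Proof. apply derivable_pt_lim_mult. Qed.
Lemma D_comp f g x a b : derivable_pt_lim f x a -> derivable_pt_lim g (f x) b ->
  derivable_pt_lim (fun y => g (f y)) x (b * a).
Proof. apply derivable_pt_lim_comp. Qed.
Lemma D_scal c f x a : derivable_pt_lim f x a ->
  derivable_pt_lim (fun y => c * f y) x (c * a).
Proof. intros H. apply (derivable_pt_lim_scal f c x a H). Qed.
Lemma D_inv f x a : derivable_pt_lim f x a -> f x <> 0 ->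
  derivable_pt_lim (fun y => / f y) x (- a / f x ^ 2).
Proof.
  intros H Hn.
  apply derivable_pt_lim_ext with (fun y => fct_cte 1 y / f y).
  { intros y; unfold fct_cte, Rdiv; ring. }
  apply D_val with ((0 * f x - a * fct_cte 1 x) / Rsqr (f x)).
  - apply (derivable_pt_lim_div (fct_cte 1) f); auto. apply derivable_pt_lim_const.
  - unfold fct_cte, Rsqr; field; auto.
Qed.
Lemma D_sq x : derivable_pt_lim (fun y => y ^ 2) x (2 * x).
Proof. eapply D_val; [apply (derivable_pt_lim_pow x 2)|simpl; ring]. Qed.

(* For 0 <= ep < s: rad ep s = sqrt (s^2 - ep^2), the antiderivative area2 ep of
   2 rad ep vanishing at ep, and its cube root. *)
Definition rad (ep s : R) : R := sqrt (s ^ 2 - ep ^ 2).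
Definition area2 (ep s : R) : R := s * rad ep s - ep ^ 2 * ln (s + rad ep s) + ep ^ 2 * ln ep.
Definition cbrt_area (ep s : R) : R := Rpower (area2 ep s) (1/3).

Lemma rad_pos ep s : ep ^ 2 < s ^ 2 -> 0 < rad ep s.
Proof. intros; unfold rad; apply sqrt_lt_R0; lra. Qed.
Lemma rad_sq ep s : ep ^ 2 < s ^ 2 -> rad ep s ^ 2 = s ^ 2 - ep ^ 2.
Proof. intros; unfold rad; apply pow2_sqrt; lra. Qed.
Lemma cbrt_area_pos ep s : 0 < cbrt_area ep s.
Proof. apply exp_pos. Qed.
Lemma rad_zero s : 0 < s -> rad 0 s = s.
Proof. intros; unfold rad; replace (s ^ 2 - 0 ^ 2) with (s ^ 2) by ring; apply sqrt_pow2; lra. Qed.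
Lemma cbrt_area_zero s : 0 < s -> cbrt_area 0 s = Rpower (s ^ 2) (1/3).
Proof. intros; unfold cbrt_area, area2; rewrite rad_zero by auto; f_equal; ring. Qed.

Lemma cube_Rpower x : 0 < x -> Rpower x (1/3) ^ 3 = x.
Proof.
  intros Hx. rewrite <- Rpower_pow by apply exp_pos.
  rewrite Rpower_mult. replace (1/3 * INR 3) with 1 by (simpl; field). now apply Rpower_1.
Qed.

Lemma rad_deriv ep s : ep ^ 2 < s ^ 2 -> derivable_pt_lim (rad ep) s (s / rad ep s).
Proof.
  intros H. pose proof (rad_pos _ _ H).
  eapply D_val.
  - apply D_comp with (g := sqrt).
    + apply D_minus; [apply D_sq|apply derivable_pt_lim_const].
    + apply derivable_pt_lim_sqrt; lra.
  - fold (rad ep s). field. lra.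
Qed.

Lemma area2_deriv ep s : 0 < s -> ep ^ 2 < s ^ 2 ->
  derivable_pt_lim (area2 ep) s (2 * rad ep s).
Proof.
  intros Hs H. pose proof (rad_pos _ _ H). pose proof (rad_sq _ _ H) as Hq.
  eapply D_val.
  - apply D_plus; [apply D_minus|apply derivable_pt_lim_const].
    + apply D_mult; [apply derivable_pt_lim_id|apply rad_deriv; auto].
    + apply D_scal, D_comp with (g := ln).
      * apply D_plus; [apply derivable_pt_lim_id|apply rad_deriv; auto].
      * apply derivable_pt_lim_ln; lra.
  - replace (ep ^ 2) with (s ^ 2 - rad ep s ^ 2) by (rewrite Hq; ring).
    unfold id. field. lra.
Qed.

Lemma cbrt_area_deriv ep s : 0 < s -> ep ^ 2 < s ^ 2 -> 0 < area2 ep s ->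
  derivable_pt_lim (cbrt_area ep) s (2/3 * (rad ep s * (/ cbrt_area ep s * / cbrt_area ep s))).
Proof.
  intros Hs H HL.
  eapply D_val.
  - apply D_comp with (g := fun x => Rpower x (1/3)); [apply area2_deriv; auto|].
    apply derivable_pt_lim_power; auto.
  - assert (E : Rpower (area2 ep s) (1/3 - 1) = / cbrt_area ep s * / cbrt_area ep s).
    { unfold cbrt_area, Rpower. rewrite <- !exp_Ropp, <- exp_plus. f_equal. field. }
    rewrite E. field. pose proof (cbrt_area_pos ep s); lra.
Qed.

(* Derivatives of f_t of every order are polynomials in s, rad, 1/rad,
   cbrt_area and 1/cbrt_area; [term] is the syntax of such polynomials, and it
   is closed under the formal derivative [tderiv]. *)
Inductive term : Type :=
  | TConst (q : R) | TVar | TRad | TRadInv | TCbrt | TCbrtInv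
  | TAdd (a b : term) | TMul (a b : term).

Fixpoint teval (ep s : R) (e : term) : R :=
  match e with
  | TConst q => q
  | TVar => s
  | TRad => rad ep s
  | TRadInv => / rad ep s
  | TCbrt => cbrt_area ep s
  | TCbrtInv => / cbrt_area ep s
  | TAdd a b => teval ep s a + teval ep s b
  | TMul a b => teval ep s a * teval ep s b
  end.

Fixpoint tderiv (e : term) : term :=
  match e with
  | TConst _ => TConst 0
  | TVar => TConst 1
  | TRad => TMul TVar TRadInv
  | TRadInv => TMul (TConst (-1)) (TMul TVar (TMul TRadInv (TMul TRadInv TRadInv)))
  | TCbrt => TMul (TConst (2/3)) (TMul TRad (TMul TCbrtInv TCbrtInv))
  | TCbrtInv => TMul (TConst (-(2/3)))
                  (TMul TRad (TMul TCbrtInv (TMul TCbrtInv (TMul TCbrtInv TCbrtInv))))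
  | TAdd a b => TAdd (tderiv a) (tderiv b)
  | TMul a b => TAdd (TMul (tderiv a) b) (TMul a (tderiv b))
  end.

Lemma teval_deriv ep s e : 0 < s -> ep ^ 2 < s ^ 2 -> 0 < area2 ep s ->
  derivable_pt_lim (fun y => teval ep y e) s (teval ep s (tderiv e)).
Proof.
  intros Hs H HL. pose proof (rad_pos _ _ H). pose proof (cbrt_area_pos ep s).
  induction e; simpl.
  - apply derivable_pt_lim_const.
  - apply derivable_pt_lim_id.
  - eapply D_val; [apply rad_deriv; auto|]. field; lra.
  - eapply D_val; [apply D_inv; [apply rad_deriv; auto|lra]|]. field; lra.
  - apply cbrt_area_deriv; auto.
  - eapply D_val; [apply D_inv; [apply cbrt_area_deriv; auto|lra]|]. field; lra.
  - apply D_plus; auto.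
  - apply D_mult; auto.
Qed.

Definition near0 (P : R -> Prop) : Prop :=
  exists eta, 0 < eta /\ forall ep, 0 < ep < eta -> P ep.

Lemma near0_and (P Q : R -> Prop) : near0 P -> near0 Q -> near0 (fun ep => P ep /\ Q ep).
Proof.
  intros [e1 [He1 HP]] [e2 [He2 HQ]]. exists (Rmin e1 e2); split; [now apply Rmin_pos|].
  intros ep Hep. pose proof (Rmin_l e1 e2); pose proof (Rmin_r e1 e2).
  split; [apply HP|apply HQ]; lra.
Qed.

Lemma near0_mono (P Q : R -> Prop) : near0 P -> (forall ep, 0 < ep -> P ep -> Q ep) -> near0 Q.
Proof. intros [e [He HP]] HPQ. exists e; split; auto. intros ep Hep; apply HPQ, HP; lra. Qed.

Definition uconv (I : R -> Prop) (F : R -> R -> R) (G : R -> R) : Prop :=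
  forall eps, 0 < eps -> near0 (fun ep => forall s, I s -> Rabs (F ep s - G s) < eps).
Definition ubounded (I : R -> Prop) (G : R -> R) : Prop :=
  exists M, 0 <= M /\ forall s, I s -> Rabs (G s) <= M.

Section UniformConvergence.
Variable I : R -> Prop.

Lemma uconv_static g : uconv I (fun _ s => g s) g.
Proof.
  intros eps He; exists 1; split; [lra|]; intros.
  rewrite Rminus_diag, Rabs_R0; lra.
Qed.

Lemma uconv_ext F G F' G' : uconv I F G ->
  (forall ep s, 0 < ep -> I s -> F ep s = F' ep s) -> (forall s, I s -> G s = G' s) ->
  uconv I F' G'.
Proof.
  intros H HF HG eps He. apply (near0_mono _ _ (H eps He)).
  intros ep Hep P s Hs. rewrite <- HF, <- HG; auto.
Qed.

Lemma uconv_plus F1 G1 F2 G2 : uconv I F1 G1 -> uconv I F2 G2 ->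
  uconv I (fun ep s => F1 ep s + F2 ep s) (fun s => G1 s + G2 s).
Proof.
  intros H1 H2 eps Heps.
  apply (near0_mono _ _ (near0_and _ _ (H1 (eps/2) ltac:(lra)) (H2 (eps/2) ltac:(lra)))).
  intros ep _ [P1 P2] s Hs. specialize (P1 s Hs). specialize (P2 s Hs).
  replace (F1 ep s + F2 ep s - (G1 s + G2 s)) with ((F1 ep s - G1 s) + (F2 ep s - G2 s)) by ring.
  eapply Rle_lt_trans; [apply Rabs_triang|lra].
Qed.

(* Products converge since the limits are bounded: F1 F2 - G1 G2 = (F1 - G1) F2 + G1 (F2 - G2). *)
Lemma uconv_mult F1 G1 F2 G2 : uconv I F1 G1 -> uconv I F2 G2 ->
  ubounded I G1 -> ubounded I G2 ->
  uconv I (fun ep s => F1 ep s * F2 ep s) (fun s => G1 s * G2 s).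
Proof.
  intros H1 H2 [M1 [HM1 B1]] [M2 [HM2 B2]] eps Heps.
  set (e1 := eps / (2 * (M2 + 1))). set (e2 := Rmin 1 (eps / (2 * (M1 + 1)))).
  assert (He1 : 0 < e1) by (apply Rdiv_lt_0_compat; lra).
  assert (He2 : 0 < e2) by (apply Rmin_pos; [lra|apply Rdiv_lt_0_compat; lra]).
  apply (near0_mono _ _ (near0_and _ _ (H1 e1 He1) (H2 e2 He2))).
  intros ep _ [P1 P2] s Hs.
  specialize (P1 s Hs); specialize (P2 s Hs); specialize (B1 s Hs); specialize (B2 s Hs).
  assert (e2 <= 1) by apply Rmin_l. assert (e2 <= eps / (2 * (M1 + 1))) by apply Rmin_r.
  set (a := F1 ep s - G1 s) in *. set (b := F2 ep s - G2 s) in *.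
  replace (F1 ep s * F2 ep s - G1 s * G2 s) with (a * F2 ep s + G1 s * b) by (unfold a, b; ring).
  assert (HF2 : Rabs (F2 ep s) <= M2 + 1).
  { replace (F2 ep s) with (G2 s + b) by (unfold b; ring).
    eapply Rle_trans; [apply Rabs_triang|lra]. }
  assert (Q1 : Rabs a * Rabs (F2 ep s) <= eps / 2).
  { replace (eps / 2) with (e1 * (M2 + 1)) by (unfold e1; field; lra).
    apply Rmult_le_compat; try apply Rabs_pos; lra. }
  assert (Q2 : Rabs (G1 s) * Rabs b < eps / 2).
  { apply Rle_lt_trans with (M1 * (eps / (2 * (M1 + 1)))).
    - apply Rmult_le_compat; try apply Rabs_pos; lra.
    - apply Rmult_lt_reg_r with (2 * (M1 + 1)); [lra|].
      field_simplify; nra. }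
  eapply Rle_lt_trans; [apply Rabs_triang|]. rewrite !Rabs_mult. lra.
Qed.

Lemma uconv_inv F G m : 0 < m -> uconv I F G -> (forall s, I s -> m <= Rabs (G s)) ->
  uconv I (fun ep s => / F ep s) (fun s => / G s).
Proof.
  intros Hm H HG eps Heps.
  apply (near0_mono _ _ (H (Rmin (m/2) (eps * (m * m / 2))) ltac:(apply Rmin_pos; [lra|apply Rmult_lt_0_compat; nra]))).
  intros ep _ P s Hs. specialize (P s Hs). specialize (HG s Hs).
  pose proof (Rmin_l (m/2) (eps * (m * m / 2))); pose proof (Rmin_r (m/2) (eps * (m * m / 2))).
  assert (HF : m/2 <= Rabs (F ep s)).
  { pose proof (Rabs_triang_inv (G s) (G s - F ep s)) as T.
    replace (G s - (G s - F ep s)) with (F ep s) in T by ring.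
    rewrite Rabs_minus_sym in T. lra. }
  assert (F ep s <> 0) by (intro E; rewrite E, Rabs_R0 in HF; lra).
  assert (G s <> 0) by (intro E; rewrite E, Rabs_R0 in HG; lra).
  replace (/ F ep s - / G s) with ((G s - F ep s) / (F ep s * G s)) by (field; auto).
  unfold Rdiv. rewrite Rabs_mult, Rabs_inv, Rabs_mult, Rabs_minus_sym.
  assert (Hprod : m/2 * m <= Rabs (F ep s) * Rabs (G s)) by (apply Rmult_le_compat; lra).
  apply Rmult_lt_reg_r with (Rabs (F ep s) * Rabs (G s)); [nra|].
  rewrite Rmult_assoc, Rinv_l by (rewrite <- Rabs_mult; apply Rabs_no_R0, Rmult_integral_contrapositive; auto).
  nra.
Qed.

(* Cube roots converge when the limit is bounded below by m > 0, because
   a^3 - b^3 = (a - b)(a^2 + ab + b^2) with a^2 + ab + b^2 >= m^(2/3). *)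
Lemma uconv_cbrt F G m : 0 < m -> uconv I F G -> (forall s, I s -> m <= G s) ->
  uconv I (fun ep s => Rpower (F ep s) (1/3)) (fun s => Rpower (G s) (1/3)).
Proof.
  intros Hm H HG eps Heps.
  set (c := Rpower m (1/3)). assert (Hc : 0 < c) by apply exp_pos.
  apply (near0_mono _ _ (H (Rmin (m/2) (eps * (c * c))) ltac:(apply Rmin_pos; [lra|apply Rmult_lt_0_compat; nra]))).
  intros ep _ P s Hs. specialize (P s Hs). specialize (HG s Hs).
  pose proof (Rmin_l (m/2) (eps * (c * c))); pose proof (Rmin_r (m/2) (eps * (c * c))).
  assert (HF : 0 < F ep s) by (apply Rabs_def2 in P; lra).
  set (a := Rpower (F ep s) (1/3)). set (b := Rpower (G s) (1/3)).
  assert (Ha : 0 < a) by apply exp_pos.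
  assert (Hb : c <= b) by (apply Rle_Rpower_l; lra).
  assert (E : F ep s - G s = (a - b) * (a * a + a * b + b * b)).
  { unfold a, b. rewrite <- (cube_Rpower (F ep s)) at 1 by auto.
    rewrite <- (cube_Rpower (G s)) at 1 by lra. ring. }
  rewrite E, Rabs_mult, (Rabs_right (a * a + a * b + b * b)) in P by nra.
  assert (Rabs (a - b) * (c * c) <= Rabs (a - b) * (a * a + a * b + b * b))
    by (apply Rmult_le_compat_l; [apply Rabs_pos|nra]).
  nra.
Qed.

Lemma ubounded_range g M : 0 <= M -> (forall s, I s -> 0 <= g s <= M) -> ubounded I g.
Proof.
  intros HM Hg. exists M; split; auto. intros s Hs. specialize (Hg s Hs).
  rewrite Rabs_right; lra.
Qed.

Lemma ubounded_inv g m : 0 < m -> (forall s, I s -> m <= g s) -> ubounded I (fun s => / g s).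
Proof.
  intros Hm Hg. apply ubounded_range with (/ m); [left; now apply Rinv_0_lt_compat|].
  intros s Hs; specialize (Hg s Hs).
  split; [left; apply Rinv_0_lt_compat; lra|apply Rinv_le_contravar; lra].
Qed.

Lemma ubounded_plus g1 g2 : ubounded I g1 -> ubounded I g2 -> ubounded I (fun s => g1 s + g2 s).
Proof.
  intros [M1 [HM1 B1]] [M2 [HM2 B2]]. exists (M1 + M2); split; [lra|]. intros s Hs.
  eapply Rle_trans; [apply Rabs_triang|]. specialize (B1 s Hs); specialize (B2 s Hs); lra.
Qed.

Lemma ubounded_mult g1 g2 : ubounded I g1 -> ubounded I g2 -> ubounded I (fun s => g1 s * g2 s).
Proof.
  intros [M1 [HM1 B1]] [M2 [HM2 B2]]. exists (M1 * M2); split; [nra|]. intros s Hs.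
  rewrite Rabs_mult. apply Rmult_le_compat; auto; apply Rabs_pos.
Qed.

End UniformConvergence.

Definition segment (dl s : R) : Prop := dl <= s <= 1.

Lemma ln_le_mono x y : 0 < x -> x <= y -> ln x <= ln y.
Proof. intros; destruct (Req_dec x y); [subst; lra|left; apply ln_increasing; lra]. Qed.

Lemma ln2_lt_1 : ln 2 < 1.
Proof.
  rewrite <- (ln_exp 1). apply ln_increasing; [lra|].
  pose proof (exp_ineq1 1); lra.
Qed.

(* |ep^2 ln ep| <= ep on (0, 1), from ln (1/ep) <= 1/ep - 1. *)
Lemma sq_ln_small ep : 0 < ep < 1 -> Rabs (ep ^ 2 * ln ep) <= ep.
Proof.
  intros H. assert (ln ep < 0) by (rewrite <- ln_1; apply ln_increasing; lra).
  pose proof (exp_ineq1_le (ln (/ ep))) as E.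
  rewrite exp_ln, ln_Rinv in E by (try apply Rinv_0_lt_compat; lra).
  rewrite Rabs_left1 by nra.
  assert (ep * (- ln ep) <= ep * (/ ep - 1)) by (apply Rmult_le_compat_l; lra).
  assert (ep * / ep = 1) by (field; lra). nra.
Qed.

Section BaseConvergence.
Variable dl : R.
Hypothesis Hdl : 0 < dl <= 1.

(* s - rad ep s = ep^2 / (s + rad ep s) <= ep^2 / dl. *)
Lemma uconv_rad : uconv (segment dl) rad (fun s => s).
Proof.
  intros eps He.
  exists (Rmin 1 (Rmin (dl/2) (eps * dl))). split; [repeat apply Rmin_pos; nra|].
  intros ep Hep s Hs. unfold segment in Hs.
  pose proof (Rmin_l 1 (Rmin (dl/2) (eps * dl))); pose proof (Rmin_r 1 (Rmin (dl/2) (eps * dl))).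
  pose proof (Rmin_l (dl/2) (eps * dl)); pose proof (Rmin_r (dl/2) (eps * dl)).
  assert (Hsq : ep ^ 2 < s ^ 2) by nra.
  pose proof (rad_sq _ _ Hsq); pose proof (rad_pos _ _ Hsq).
  assert (rad ep s <= s) by nra.
  rewrite Rabs_left1 by lra.
  assert ((s - rad ep s) * dl <= (s - rad ep s) * (s + rad ep s)) by nra.
  nra.
Qed.

(* area2 ep s - s^2 = s (rad ep s - s) - ep^2 ln (s + rad ep s) + ep^2 ln ep,
   and ln (s + rad ep s) stays in [ln dl, ln 2]. *)
Lemma uconv_area2 : uconv (segment dl) area2 (fun s => s ^ 2).
Proof.
  intros eps He.
  set (K := 1 + Rabs (ln dl)). assert (HK : 0 < K) by (pose proof (Rabs_pos (ln dl)); unfold K; lra).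
  assert (Hsmall : near0 (fun ep => ep < 1 /\ ep < dl/2 /\ ep * (3 * K + 3) < eps)).
  { exists (Rmin (Rmin 1 (dl/2)) (eps / (3 * K + 3))). split.
    { repeat apply Rmin_pos; try lra. apply Rdiv_lt_0_compat; lra. }
    intros ep Hep.
    pose proof (Rmin_l (Rmin 1 (dl/2)) (eps / (3 * K + 3))).
    pose proof (Rmin_r (Rmin 1 (dl/2)) (eps / (3 * K + 3))).
    pose proof (Rmin_l 1 (dl/2)); pose proof (Rmin_r 1 (dl/2)).
    repeat split; try lra.
    apply Rlt_le_trans with (eps / (3 * K + 3) * (3 * K + 3)); [apply Rmult_lt_compat_r; lra|].
    right; field; lra. }
  apply (near0_mono _ _ (near0_and _ _ Hsmall (uconv_rad (eps/3) ltac:(lra)))).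
  intros ep Hep [[Hep1 [Hep2 Hep3]] P] s Hs. specialize (P s Hs). unfold segment in Hs.
  assert (Hsq : ep ^ 2 < s ^ 2) by nra.
  pose proof (rad_sq _ _ Hsq); pose proof (rad_pos _ _ Hsq).
  assert (rad ep s <= s) by nra.
  assert (HL : Rabs (ln (s + rad ep s)) <= K).
  { assert (ln dl <= ln (s + rad ep s)) by (apply ln_le_mono; lra).
    assert (ln (s + rad ep s) <= ln 2) by (apply ln_le_mono; lra).
    pose proof ln2_lt_1. pose proof (Rabs_pos (ln dl)).
    pose proof (Rle_abs (- ln dl)) as Hq. rewrite Rabs_Ropp in Hq.
    unfold K. apply Rabs_le. lra. }
  pose proof (sq_ln_small ep ltac:(lra)) as HE.
  unfold area2.
  replace (s * rad ep s - ep ^ 2 * ln (s + rad ep s) + ep ^ 2 * ln ep - s ^ 2)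
    with (s * (rad ep s - s) + (- (ep ^ 2 * ln (s + rad ep s)) + ep ^ 2 * ln ep)) by ring.
  eapply Rle_lt_trans; [apply Rabs_triang|].
  eapply Rle_lt_trans; [apply Rplus_le_compat_l, Rabs_triang|].
  rewrite Rabs_Ropp, !Rabs_mult, (Rabs_right s), (Rabs_right (ep ^ 2)) by nra.
  rewrite Rabs_mult, (Rabs_right (ep ^ 2)) in HE by nra.
  assert (s * Rabs (rad ep s - s) <= Rabs (rad ep s - s)) by (pose proof (Rabs_pos (rad ep s - s)); nra).
  assert (ep ^ 2 * Rabs (ln (s + rad ep s)) <= ep * K)
    by (pose proof (Rabs_pos (ln (s + rad ep s))); assert (ep ^ 2 <= ep) by nra; nra).
  nra.
Qed.

Lemma cbrt_area_zero_bounds s : segment dl s ->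
  Rpower (dl ^ 2) (1/3) <= cbrt_area 0 s <= 1.
Proof.
  intros Hs. unfold segment in Hs. rewrite cbrt_area_zero by lra. split.
  - apply Rle_Rpower_l; nra.
  - replace 1 with (Rpower 1 (1/3)) at 2 by (unfold Rpower; rewrite ln_1, Rmult_0_r; apply exp_0).
    apply Rle_Rpower_l; nra.
Qed.

Lemma uconv_cbrt_area : uconv (segment dl) cbrt_area (cbrt_area 0).
Proof.
  apply uconv_ext with (fun ep s => Rpower (area2 ep s) (1/3)) (fun s => Rpower (s ^ 2) (1/3)); auto.
  - apply uconv_cbrt with (dl ^ 2); [nra|apply uconv_area2|].
    intros s Hs; unfold segment in Hs; nra.
  - intros s Hs; unfold segment in Hs; rewrite cbrt_area_zero; auto; lra.
Qed.

Lemma uconv_term e :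
  uconv (segment dl) (fun ep s => teval ep s e) (fun s => teval 0 s e) /\
  ubounded (segment dl) (fun s => teval 0 s e).
Proof.
  set (c := Rpower (dl ^ 2) (1/3)). assert (Hc : 0 < c) by apply exp_pos.
  assert (Urad : uconv (segment dl) rad (rad 0)).
  { apply uconv_ext with rad (fun s => s); auto; [apply uconv_rad|].
    intros s Hs; unfold segment in Hs; rewrite rad_zero; lra. }
  assert (Brad : forall s, segment dl s -> dl <= rad 0 s <= 1)
    by (intros s Hs; unfold segment in Hs; rewrite rad_zero; lra).
  pose proof cbrt_area_zero_bounds as Bc; fold c in Bc.
  induction e as [q| | | | | |a [Ua Ba] b [Ub Bb]|a [Ua Ba] b [Ub Bb]]; simpl.
  - split; [apply (uconv_static _ (fun _ => q))|]. exists (Rabs q); split; [apply Rabs_pos|intros; lra].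
  - split; [apply (uconv_static _ (fun s => s))|].
    apply ubounded_range with 1; [lra|intros s Hs; unfold segment in Hs; lra].
  - split; [exact Urad|].
    apply ubounded_range with 1; [lra|intros s Hs; specialize (Brad s Hs); lra].
  - split; [apply uconv_inv with dl; [lra|exact Urad|]|apply ubounded_inv with dl; [lra|]];
      intros s Hs; specialize (Brad s Hs); try rewrite Rabs_right; lra.
  - split; [exact uconv_cbrt_area|].
    apply ubounded_range with 1; [lra|intros s Hs; specialize (Bc s Hs); lra].
  - split; [apply uconv_inv with c; [lra|exact uconv_cbrt_area|]|apply ubounded_inv with c; [lra|]];
      intros s Hs; specialize (Bc s Hs); try rewrite Rabs_right; lra.
  - split; [now apply uconv_plus|now apply ubounded_plus].
  - split; [now apply uconv_mult|now apply ubounded_mult].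
Qed.
End BaseConvergence.

Lemma continuity_pt_of_deriv f x l : derivable_pt_lim f x l -> continuity_pt f x.
Proof. intros H; exact (derivable_continuous_pt f x (exist _ l H)). Qed.

(* The cube root (extended by 0 on the negatives) is continuous everywhere;
   at 0 because x < eps^3 implies x^(1/3) < eps. *)
Lemma cbrt_nonneg_continuous x : continuity_pt cbrt_nonneg x.
Proof.
  destruct (Rtotal_order x 0) as [Hx|[->|Hx]].
  - apply continuity_pt_locally_ext with (fun _ => 0) (-x); [lra| |apply continuity_pt_const; now intros a b].
    intros y Hy. unfold Rdist in Hy. apply Rabs_def2 in Hy.
    unfold cbrt_nonneg; destruct Rle_dec; lra.
  - intros eps He. exists (Rmin 1 (eps ^ 3)).
    split; [apply Rlt_gt, Rmin_pos; [lra|apply pow_lt; lra]|].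
    intros y [_ Hy]. change (Rabs (y - 0) < Rmin 1 (eps ^ 3)) in Hy.
    change (Rabs (cbrt_nonneg y - cbrt_nonneg 0) < eps).
    pose proof (Rmin_r 1 (eps ^ 3)).
    unfold cbrt_nonneg. destruct (Rle_dec 0 0) as [_|]; [|lra].
    destruct (Rle_dec y 0); [rewrite Rminus_diag, Rabs_R0; lra|].
    rewrite Rminus_0_r in *. rewrite Rabs_right in Hy by lra.
    rewrite Rabs_right by (left; apply exp_pos).
    replace eps with (Rpower (eps ^ 3) (1/3)) by (rewrite <- Rpower_pow, Rpower_mult by lra;
      replace (INR 3 * (1/3)) with 1 by (simpl; field); apply Rpower_1; lra).
    apply Rlt_Rpower_l; lra.
  - apply continuity_pt_locally_ext with (fun y => Rpower y (1/3)) x; [lra| |].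
    + intros y Hy. unfold Rdist in Hy. apply Rabs_def2 in Hy.
      unfold cbrt_nonneg; destruct Rle_dec; lra.
    + eapply continuity_pt_of_deriv, derivable_pt_lim_power; auto.
Qed.

Definition shgap (tau : R) : R := sinh (2 * tau) - 2 * tau.
Definition integrand (tau : R) : R := cbrt_nonneg (shgap tau).
Definition Phi (T : R) : R := Rint integrand 0 T.

Lemma integrand_continuous x : continuity_pt integrand x.
Proof.
  change (continuity_pt (comp cbrt_nonneg shgap) x).
  apply continuity_pt_comp; [|apply cbrt_nonneg_continuous].
  assert (Hlin : derivable_pt_lim (fun y => 2 * y) x (2 * 1)) by apply D_scal, derivable_pt_lim_id.
  eapply continuity_pt_of_deriv, D_minus; [|exact Hlin].
  apply D_comp with (g := sinh); [exact Hlin|apply derivable_pt_lim_sinh].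
Qed.

Lemma Rint_RiemannInt f a b (pr : Riemann_integrable f a b) : Rint f a b = RiemannInt pr.
Proof.
  unfold Rint. destruct excluded_middle_informative as [E|E].
  - destruct (constructive_indefinite_description _ E) as [v [pr' Hv]]; simpl.
    rewrite <- Hv. apply RiemannInt_P5.
  - exfalso; apply E. now exists (RiemannInt pr), pr.
Qed.

Lemma continuous_integrable f a b : (forall x, continuity_pt f x) -> Riemann_integrable f a b.
Proof.
  intros H. destruct (Rle_dec a b).
  - now apply continuity_implies_RiemannInt.
  - apply RiemannInt_P1, continuity_implies_RiemannInt; auto; lra.
Qed.

Lemma Rint_deriv f a x : (forall y, continuity_pt f y) ->
  derivable_pt_lim (fun y => Rint f a y) x (f x).
Proof.
  intros Hc.
  assert (h : x - 1 <= x + 1) by lra.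
  assert (C0 : forall y, x - 1 <= y <= x + 1 -> continuity_pt f y) by auto.
  pose proof (@RiemannInt_P27 f (x - 1) (x + 1) x h C0 ltac:(lra)) as HP.
  set (P := primitive h (FTC_P1 h C0)) in *.
  set (pr0 := continuous_integrable f a (x - 1) Hc).
  apply derivable_pt_lim_locally_ext with (fun y => RiemannInt pr0 + P y) (x - 1) (x + 1); [lra| |].
  - intros y Hy. rewrite (Rint_RiemannInt f a y (continuous_integrable f a y Hc)).
    unfold P, primitive. do 2 (destruct Rle_dec; [|lra]).
    apply RiemannInt_P26.
  - eapply D_val; [apply D_plus; [apply derivable_pt_lim_const|exact HP]|ring].
Qed.

Lemma Phi_deriv x : derivable_pt_lim Phi x (integrand x).
Proof. apply Rint_deriv, integrand_continuous. Qed.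

Section ClosedForm.
Variable ep : R.
Hypothesis Hep : 0 < ep.

Lemma arccosh_scaled s : ep < s -> arccosh (s / ep) = ln (s + rad ep s) - ln ep.
Proof.
  intros Hs. assert (Hsq : ep ^ 2 < s ^ 2) by nra. pose proof (rad_pos _ _ Hsq).
  assert (Hq : sqrt ((s / ep) ^ 2 - 1) = rad ep s / ep).
  { rewrite <- (sqrt_pow2 (rad ep s / ep)) by (apply Rlt_le, Rdiv_lt_0_compat; lra).
    f_equal. unfold Rdiv. rewrite !Rpow_mult_distr, rad_sq by auto. field. lra. }
  unfold arccosh. rewrite Hq.
  replace (s / ep + rad ep s / ep) with ((s + rad ep s) * / ep) by (field; lra).
  rewrite ln_mult, ln_Rinv; try lra. now apply Rinv_0_lt_compat.
Qed.

Lemma arccosh_scaled_nonneg s : ep < s -> 0 <= arccosh (s / ep).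
Proof.
  intros Hs. assert (Hsq : ep ^ 2 < s ^ 2) by nra. pose proof (rad_pos _ _ Hsq).
  rewrite arccosh_scaled by auto.
  assert (ln ep <= ln (s + rad ep s)) by (apply ln_le_mono; lra). lra.
Qed.

Lemma arccosh_scaled_deriv s : ep < s ->
  derivable_pt_lim (fun y => arccosh (y / ep)) s (/ rad ep s).
Proof.
  intros Hs. assert (Hsq : ep ^ 2 < s ^ 2) by nra. pose proof (rad_pos _ _ Hsq).
  apply derivable_pt_lim_locally_ext with (fun y => ln (y + rad ep y) - ln ep) ep (s + 1); [lra| |].
  - intros y Hy. symmetry; apply arccosh_scaled; lra.
  - eapply D_val.
    + apply D_minus; [|apply derivable_pt_lim_const].
      apply D_comp with (g := ln); [apply D_plus; [apply derivable_pt_lim_id|apply rad_deriv; auto]|].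
      apply derivable_pt_lim_ln; lra.
    + field; lra.
Qed.

Lemma shgap_arccosh s : ep < s -> shgap (arccosh (s / ep)) = 2 * area2 ep s / ep ^ 2.
Proof.
  intros Hs. assert (Hsq : ep ^ 2 < s ^ 2) by nra. pose proof (rad_pos _ _ Hsq).
  pose proof (rad_sq _ _ Hsq) as Hq.
  set (y := (s + rad ep s) / ep).
  assert (Hyp : 0 < y) by (apply Rdiv_lt_0_compat; lra).
  assert (Hl : ln y = ln (s + rad ep s) - ln ep).
  { unfold y, Rdiv. rewrite ln_mult, ln_Rinv; try lra. now apply Rinv_0_lt_compat. }
  assert (E1 : exp (2 * ln y) = y * y).
  { replace (2 * ln y) with (ln y + ln y) by ring. rewrite exp_plus, exp_ln; auto. }
  assert (Hinv : y * ((s - rad ep s) / ep) = 1).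
  { unfold y. replace ((s + rad ep s) / ep * ((s - rad ep s) / ep))
      with ((s + rad ep s) * (s - rad ep s) / ep ^ 2) by (field; lra).
    replace ((s + rad ep s) * (s - rad ep s)) with (ep ^ 2) by nra. field; lra. }
  assert (E2 : exp (- (2 * ln y)) = ((s - rad ep s) / ep) * ((s - rad ep s) / ep)).
  { rewrite exp_Ropp, E1. apply Rmult_eq_reg_l with (y * y); [|nra].
    rewrite Rinv_r by nra.
    transitivity ((y * ((s - rad ep s) / ep)) * (y * ((s - rad ep s) / ep))); [rewrite Hinv|]; ring. }
  unfold shgap, sinh. rewrite arccosh_scaled, <- Hl, E1, E2 by auto. rewrite Hl.
  unfold area2, y. field_simplify; try lra. field. lra.
Qed.

Lemma integrand_arccosh s : ep < s -> 0 < area2 ep s ->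
  Rpower 2 (-(1/3)) * Rpower ep (2/3) * integrand (arccosh (s / ep)) = cbrt_area ep s.
Proof.
  intros Hs HL. unfold integrand. rewrite shgap_arccosh by auto. unfold cbrt_nonneg.
  destruct Rle_dec as [r|].
  { exfalso. assert (0 < 2 * area2 ep s / ep ^ 2) by (apply Rdiv_lt_0_compat; nra). lra. }
  unfold cbrt_area, Rpower. rewrite <- !exp_plus. f_equal.
  unfold Rdiv. rewrite ln_mult, ln_mult, ln_Rinv, ln_pow; try lra; try nra.
  simpl INR. field.
Qed.
End ClosedForm.

Lemma ft_derivative t s : 0 < Cmod t -> Cmod t < s -> 0 < area2 (Cmod t) s ->
  derivable_pt_lim (ft t) s (cbrt_area (Cmod t) s * / rad (Cmod t) s).
Proof.
  intros He Hs HL.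
  change (ft t) with (fun y => Rpower 2 (-(1/3)) * Rpower (Cmod t) (2/3) * Phi (arccosh (y / Cmod t))).
  eapply D_val.
  - apply D_scal, D_comp with (g := Phi); [apply arccosh_scaled_deriv; auto|apply Phi_deriv].
  - rewrite <- (integrand_arccosh (Cmod t) He s Hs HL). ring.
Qed.

Definition first_deriv_term : term := TMul TCbrt TRadInv.
Definition deriv_term (k : nat) : term := Nat.iter k tderiv first_deriv_term.

Lemma f0_derivative s : 0 < s -> derivable_pt_lim f0 s (teval 0 s first_deriv_term).
Proof.
  intros Hs. simpl. rewrite cbrt_area_zero, rad_zero by auto.
  eapply D_val; [apply D_scal, derivable_pt_lim_power; auto|].
  replace (/ s) with (exp (- ln s)) by (rewrite exp_Ropp, exp_ln; auto).
  unfold Rpower. rewrite ln_pow by auto. rewrite <- !exp_plus.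
  replace (3 / 2 * (2 / 3 * exp ((2 / 3 - 1) * ln s))) with (exp ((2 / 3 - 1) * ln s)) by field.
  f_equal. simpl INR. field.
Qed.

Lemma Dn_f0 k s : 0 < s -> Dn (S k) f0 s = teval 0 s (deriv_term k).
Proof.
  intros Hs. rewrite Dn_succ_inner.
  apply Dn_on_open with (U := fun x => 0 < x) (g := fun n y => teval 0 y (deriv_term n)); auto.
  - intros x Hx. exists 0, (x + 1); split; [lra|auto]. intros y Hy; lra.
  - intros x Hx. apply Deriv_correct, f0_derivative; auto.
  - intros n x Hx. apply teval_deriv; auto; [nra|].
    unfold area2; rewrite rad_zero by auto; nra.
Qed.

Lemma area2_pos dl ep s : 0 < dl <= 1 -> 0 < ep < dl ^ 2 / 32 -> dl/2 < s < 2 ->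
  ep < s /\ 0 < area2 ep s.
Proof.
  intros Hd He Hs.
  assert (ep < dl / 32) by nra.
  split; [lra|].
  assert (Hsq : ep ^ 2 < s ^ 2) by nra.
  pose proof (rad_sq _ _ Hsq); pose proof (rad_pos _ _ Hsq).
  assert (dl / 4 <= rad ep s) by nra.
  assert (rad ep s <= s) by nra.
  assert (ln (s + rad ep s) <= 2).
  { apply Rle_trans with (ln (2 * 2)); [apply ln_le_mono; lra|].
    rewrite ln_mult by lra. pose proof ln2_lt_1. lra. }
  pose proof (sq_ln_small ep ltac:(nra)) as HE.
  pose proof (Rle_abs (- (ep ^ 2 * ln ep))) as HE2. rewrite Rabs_Ropp in HE2.
  assert (s * rad ep s >= dl ^ 2 / 8) by nra.
  assert (ep ^ 2 * ln (s + rad ep s) <= ep ^ 2 * 2) by (apply Rmult_le_compat_l; nra).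
  assert (ep ^ 2 <= ep) by nra.
  unfold area2. nra.
Qed.

Lemma Dn_ft k t s dl : 0 < dl <= 1 -> 0 < Cmod t < dl ^ 2 / 32 -> dl/2 < s < 2 ->
  Dn (S k) (ft t) s = teval (Cmod t) s (deriv_term k).
Proof.
  intros Hd He Hs. rewrite Dn_succ_inner.
  apply Dn_on_open with (U := fun x => dl/2 < x < 2) (g := fun n y => teval (Cmod t) y (deriv_term n)); auto.
  - intros x Hx. exists (dl/2), 2; split; auto.
  - intros x Hx. destruct (area2_pos dl (Cmod t) x Hd He Hx).
    apply Deriv_correct, ft_derivative; auto; lra.
  - intros n x Hx. destruct (area2_pos dl (Cmod t) x Hd He Hx). apply teval_deriv; auto; nra.
Qed.

Lemma deriv_compare F G f g T : 0 <= T ->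
  (forall x, derivable_pt_lim F x (f x)) -> (forall x, derivable_pt_lim G x (g x)) ->
  (forall x, 0 < x < T -> f x <= g x) -> F 0 <= G 0 -> F T <= G T.
Proof.
  intros [HT| <-] HF HG Hfg H0; [|exact H0].
  destruct (MVT_cor2 (fun x => G x - F x) (fun x => g x - f x) 0 T HT) as [c [Hc Hc2]].
  { intros c _. apply D_minus; auto. }
  specialize (Hfg c Hc2). nra.
Qed.

Lemma Phi_zero : Phi 0 = 0.
Proof. unfold Phi. rewrite (Rint_RiemannInt _ _ _ (RiemannInt_P7 integrand 0)). apply RiemannInt_P9. Qed.

Lemma integrand_nonneg x : 0 <= integrand x.
Proof. unfold integrand, cbrt_nonneg. destruct Rle_dec; [lra|left; apply exp_pos]. Qed.

Lemma Phi_nonneg T : 0 <= T -> 0 <= Phi T.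
Proof.
  intros HT.
  apply (deriv_compare (fun _ => 0) Phi (fun _ => 0) integrand T); auto using Phi_deriv, integrand_nonneg.
  - intros; apply derivable_pt_lim_const.
  - rewrite Phi_zero; lra.
Qed.

(* Since sinh 2T - 2T <= e^(2T)/2, the integrand is at most 2^(-1/3) e^(2T/3). *)
Lemma integrand_le_exp T : 0 <= T -> integrand T <= Rpower 2 (-(1/3)) * exp (2/3 * T).
Proof.
  intros HT. unfold integrand, cbrt_nonneg. destruct Rle_dec.
  - pose proof (exp_pos (-(1/3) * ln 2)); pose proof (exp_pos (2/3 * T)). unfold Rpower; nra.
  - apply Rle_trans with (Rpower (exp (2 * T) / 2) (1/3)).
    + apply Rle_Rpower_l; [lra|]. split; [lra|].
      unfold shgap, sinh. pose proof (exp_pos (-(2 * T))). lra.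
    + right. unfold Rpower, Rdiv. rewrite <- exp_plus. f_equal.
      rewrite ln_mult, ln_exp, ln_Rinv; try lra; try apply exp_pos; apply Rinv_0_lt_compat; lra.
Qed.

Lemma Phi_le_exp T : 0 <= T -> Phi T <= Rpower 2 (-(1/3)) * (3/2) * exp (2/3 * T).
Proof.
  intros HT.
  assert (Hc : 0 < Rpower 2 (-(1/3))) by apply exp_pos.
  apply Rle_trans with (Rpower 2 (-(1/3)) * (3/2) * (exp (2/3 * T) - 1)); [|nra].
  apply (deriv_compare Phi (fun x => Rpower 2 (-(1/3)) * (3/2) * (exp (2/3 * x) - 1))
           integrand (fun x => Rpower 2 (-(1/3)) * exp (2/3 * x)) T);
    auto using Phi_deriv.
  - intros x. eapply D_val.
    + apply D_scal, D_minus; [|apply derivable_pt_lim_const].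
      apply D_comp with (g := exp); [apply D_scal, derivable_pt_lim_id|apply derivable_pt_lim_exp].
    + field.
  - intros x Hx; apply integrand_le_exp; lra.
  - rewrite Phi_zero, Rmult_0_r, exp_0. lra.
Qed.

(* Hence 0 <= f_t <= f_0 on (|t|, +oo):
   f_t(s) <= (3/2) ((s + rad |t| s)/2)^(2/3) <= (3/2) s^(2/3). *)
Lemma ft_between t s : 0 < Cmod t -> Cmod t < s -> 0 <= ft t s <= f0 s.
Proof.
  intros He Hs. set (ep := Cmod t) in *.
  assert (Hsq : ep ^ 2 < s ^ 2) by nra. pose proof (rad_pos _ _ Hsq).
  assert (rad ep s <= s) by (pose proof (rad_sq _ _ Hsq); nra).
  pose proof (arccosh_scaled_nonneg ep He s Hs) as HT.
  change (ft t s) with (Rpower 2 (-(1/3)) * Rpower ep (2/3) * Phi (arccosh (s / ep))).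
  set (T := arccosh (s / ep)) in *.
  assert (HKp : 0 < Rpower 2 (-(1/3)) * Rpower ep (2/3)) by (apply Rmult_lt_0_compat; apply exp_pos).
  split; [apply Rmult_le_pos; [lra|apply Phi_nonneg; auto]|].
  apply Rle_trans with (3/2 * Rpower ((s + rad ep s) / 2) (2/3)).
  - replace (3/2 * Rpower ((s + rad ep s) / 2) (2/3))
      with (Rpower 2 (-(1/3)) * Rpower ep (2/3) * (Rpower 2 (-(1/3)) * (3/2) * exp (2/3 * T))).
    + apply Rmult_le_compat_l; [lra|]. apply Phi_le_exp; auto.
    + unfold T. rewrite arccosh_scaled by auto. unfold Rpower, Rdiv.
      rewrite ln_mult, ln_Rinv by lra.
      match goal with |- exp ?a * exp ?b * (exp ?c * ?k * exp ?d) = _ =>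
        transitivity (k * exp (a + b + c + d)); [rewrite !exp_plus; ring|] end.
      do 2 f_equal. field.
  - unfold f0. apply Rmult_le_compat_l; [lra|]. apply Rle_Rpower_l; lra.
Qed.

Lemma near0_lt c : 0 < c -> near0 (fun ep => ep < c).
Proof. intros Hc; exists c; split; auto; intros; lra. Qed.

Definition ft_uconv (dl : R) (k : nat) : Prop :=
  forall eps, 0 < eps -> near0 (fun ep => forall t, Cmod t = ep ->
    forall s, segment dl s -> Rabs (Dn k (ft t) s - Dn k f0 s) < eps).

Lemma ft_uconv_succ dl k : 0 < dl <= 1 -> ft_uconv dl (S k).
Proof.
  intros Hd eps He.
  apply (near0_mono _ _ (near0_and _ _ (near0_lt (dl ^ 2 / 32) ltac:(nra))
                                       (proj1 (uconv_term dl Hd (deriv_term k)) eps He))).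
  intros ep Hep [Hsmall P] t <- s Hs. unfold segment in Hs.
  rewrite (Dn_ft k t s dl), Dn_f0 by lra. apply P; unfold segment; lra.
Qed.

(* Order 0: on [d0, 1] with f_0(d0) <= 3 eps / 8, integrate the convergence of
   the first derivatives from d0, and use 0 <= f_t(d0) <= f_0(d0) at the left end. *)
Lemma ft_uconv_zero dl : 0 < dl <= 1 -> ft_uconv dl 0.
Proof.
  intros Hd eps He. simpl.
  set (d0 := Rmin dl (Rpower (eps/4) (3/2))).
  assert (Hd0 : 0 < d0) by (apply Rmin_pos; [lra|apply exp_pos]).
  assert (Hd0l : d0 <= dl) by apply Rmin_l.
  assert (Hf0 : f0 d0 <= 3/2 * (eps/4)).
  { unfold f0. apply Rmult_le_compat_l; [lra|].
    replace (eps/4) with (Rpower (Rpower (eps/4) (3/2)) (2/3)).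
    - apply Rle_Rpower_l; [lra|]. split; [lra|apply Rmin_r].
    - rewrite Rpower_mult. replace (3/2 * (2/3)) with 1 by field. apply Rpower_1; lra. }
  apply (near0_mono _ _ (near0_and _ _ (near0_lt (d0 ^ 2 / 32) ltac:(nra))
           (proj1 (uconv_term d0 ltac:(lra) first_deriv_term) (eps/2) ltac:(lra)))).
  intros ep Hep [Hsmall P] t <- s Hs. unfold segment in Hs.
  assert (Hd0t : Cmod t < d0) by nra.
  assert (Hs_mono : 0 <= ft t s <= f0 s) by (apply ft_between; lra).
  assert (Hd0_mono : 0 <= ft t d0 <= f0 d0) by (apply ft_between; lra).
  assert (Hmvt : Rabs ((ft t s - f0 s) - (ft t d0 - f0 d0)) < eps/2).
  { destruct (Req_dec s d0) as [->|Ns]; [rewrite Rminus_diag, Rabs_R0; lra|].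
    destruct (MVT_cor2 (fun x => ft t x - f0 x)
                (fun x => teval (Cmod t) x first_deriv_term - teval 0 x first_deriv_term) d0 s)
      as [c [Hc Hc2]]; [lra| |].
    - intros c Hc. destruct (area2_pos d0 (Cmod t) c ltac:(lra) ltac:(lra) ltac:(lra)).
      apply D_minus; [apply ft_derivative; auto; lra|apply f0_derivative; lra].
    - rewrite Hc, Rabs_mult, (Rabs_right (s - d0)) by lra.
      specialize (P c ltac:(unfold segment; lra)).
      pose proof (Rabs_pos (teval (Cmod t) c first_deriv_term - teval 0 c first_deriv_term)).
      nra. }
  apply Rabs_def2 in Hmvt. rewrite Rabs_left1; lra.
Qed.

Lemma ft_uconv_all dl k : 0 < dl <= 1 -> ft_uconv dl k.
Proof. destruct k; [apply ft_uconv_zero|apply ft_uconv_succ]. Qed.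

Lemma ratio_near_one a b m : 0 < m -> m <= Rabs b -> Rabs (a - b) < m/2 -> 1/2 <= a / b <= 2.
Proof.
  intros Hm Hb Hab.
  assert (bn : b <> 0) by (intro E; rewrite E, Rabs_R0 in Hb; lra).
  assert (HR : Rabs (a / b - 1) < 1/2).
  { replace (a / b - 1) with ((a - b) / b) by (field; auto).
    unfold Rdiv. rewrite Rabs_mult, Rabs_inv.
    apply Rmult_lt_reg_r with (Rabs b); [lra|].
    rewrite Rmult_assoc, Rinv_l by (apply Rabs_no_R0; auto). lra. }
  apply Rabs_def2 in HR. lra.
Qed.

(* f_0'(s) = s^(-1/3) >= 1 on (0, 1]: with C = s^(2/3), C^3 = s^2 >= s^3 forces C >= s. *)
Lemma f0_first_lower s : 0 < s <= 1 -> 1 <= Dn 1 f0 s.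
Proof.
  intros Hs. rewrite (Dn_f0 0 s) by lra. simpl.
  rewrite rad_zero by lra.
  pose proof (cbrt_area_pos 0 s) as HC.
  assert (E : cbrt_area 0 s ^ 3 = s ^ 2) by (rewrite cbrt_area_zero by lra; apply cube_Rpower; nra).
  set (C := cbrt_area 0 s) in *.
  assert (C >= s).
  { destruct (Rlt_or_le C s) as [Hlt|]; [|lra].
    assert (C * C < s * s) by nra. assert (C ^ 3 < s ^ 3) by nra. nra. }
  apply Rmult_le_reg_r with s; [lra|]. rewrite Rmult_assoc, Rinv_l by lra. lra.
Qed.

Lemma f0_second_lower s : 0 < s <= 1 -> 1/3 <= Rabs (Dn 2 f0 s).
Proof.
  intros Hs. rewrite (Dn_f0 1 s) by lra. simpl.
  rewrite rad_zero by lra.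
  pose proof (cbrt_area_pos 0 s) as HC.
  assert (E : s * s = cbrt_area 0 s ^ 3) by (rewrite cbrt_area_zero, cube_Rpower by nra; ring).
  assert (HC1 : cbrt_area 0 s <= 1) by (apply (cbrt_area_zero_bounds s ltac:(lra) s); unfold segment; lra).
  set (C := cbrt_area 0 s) in *.
  replace (C * (-1 * (s * (/ s * (/ s * / s))))) with (-(C * / (s * s))) by (field; lra).
  rewrite E.
  replace (2 / 3 * (s * (/ C * / C)) * / s + - (C * / C ^ 3)) with (-(1/3 * / (C * C))) by (field; lra).
  rewrite Rabs_Ropp, Rabs_right.
  - apply Rmult_le_reg_r with (C * C); [nra|]. rewrite Rmult_assoc, Rinv_l by nra. nra.
  - apply Rle_ge, Rmult_le_pos; [lra|left; apply Rinv_0_lt_compat; nra].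
Qed.

Theorem lemma3p2 :
  (forall (delta : R) (k : nat), 0 < delta < 1 ->
     forall eps : R, 0 < eps ->
     exists eta : R, 0 < eta /\
       forall t : R * R, 0 < Cmod t < 1 -> Cmod t < eta ->
       forall s : R, delta <= s <= 1 ->
         Rabs (Dn k (ft t) s - Dn k f0 s) < eps)
  /\
  (forall delta' : R, 0 < delta' ->
     exists alpha : R, 0 < alpha /\
       forall delta : R, delta' < delta < 1/4 ->
       forall t : R * R, 0 < Cmod t < 1 -> Cmod t < alpha ->
       forall s : R, delta' <= s <= delta ->
         1/2 <= Dn 1 (ft t) s / Dn 1 f0 s <= 2 /\
         1/2 <= Dn 2 (ft t) s / Dn 2 f0 s <= 2).
Proof.
  split.
  - intros delta k Hd eps He.
    destruct (ft_uconv_all delta k ltac:(lra) eps He) as [eta [Heta P]].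
    exists eta; split; auto. intros t Ht Hte s Hs. apply (P (Cmod t)); auto; lra.
  - intros dp Hdp. destruct (Rlt_or_le dp (1/4)) as [Hlt|Hge].
    2: { exists 1; split; [lra|]. intros delta Hdel; lra. }
    (* f_0' >= 1 and |f_0''| >= 1/3 on [dp, 1]; the derivatives of f_t are within half of these. *)
    destruct (near0_and _ _ (ft_uconv_all dp 1 ltac:(lra) (1/2) ltac:(lra))
                            (ft_uconv_all dp 2 ltac:(lra) (1/3/2) ltac:(lra))) as [eta [Heta P]].
    exists eta; split; auto. intros delta Hdel t Ht Hte s Hs.
    destruct (P (Cmod t) ltac:(lra)) as [P1 P2]. unfold segment in *. split.
    + apply ratio_near_one with 1; [lra| |apply P1; auto; lra].
      pose proof (f0_first_lower s ltac:(lra)). rewrite Rabs_right; lra.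
    + apply ratio_near_one with (1/3); [lra|apply f0_second_lower; lra|apply P2; auto; lra].
Qed.
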